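(* There is a universal constant $C>0$ such that for all $s\geq 2$ and $r\geq 0$ the Euclidian-hyperboloidal time function $T$ satisfies $$ |\partial_s T(s,r)|\leq \begin{cases} C\,\dfrac{s}{(s^2+r^2)^{1/2}}, & r\leq -1+s^2/2,\\[2mm] C\Big(\dfrac{\xi(s,r)\,s}{(s^2+r^2)^{1/2}}+2(1-\xi(s,r))\,s\Big), & -1+s^2/2\leq r\leq s^2/2,\\[2mm] 2C\,s, & r\geq s^2/2. \end{cases} $$ (In the first region one has $T(s,r)=\sqrt{s^2+r^2}$, so the first bound is $C\,s/T(s,r)$.)
   Context: Let $\rho_1(y)=e^{-2/(1-(2y-1)^2)}$ for $0<y<1$ and $\rho_1(y)=0$ otherwise, let $\rho_0=\int_{\mathbb R}\rho_1$, and let $\chi(y)=\rho_0^{-1}\int_{-\infty}^y\rho_1(y')\,dy'$; so $\chi$ is smooth, $\chi=0$ on $(-\infty,0]$, $\chi=1$ on $[1,\infty)$, strictly increasing on $(0,1)$. For $s\geq 2$, $r\geq 0$ set $\xi(s,r)=1-\chi(r+1-s^2/2)$, so $\xi=1$ for $r\leq -1+s^2/2$ and $\xi=0$ for $r\geq s^2/2$. The function $T=T(s,r)$ ($s\geq 2$, $r\geq 0$) is defined by $\partial_r T(s,r)=\xi(s,r)\,\dfrac{r}{\sqrt{r^2+s^2}}$, $T(s,0)=s$. *)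

From Stdlib Require Import Reals.
From Coquelicot Require Import Coquelicot.
Open Scope R_scope.

Definition rho1 (y : R) : R :=
  if Rlt_dec 0 y then
    if Rlt_dec y 1 then exp (-2 / (1 - (2*y - 1)^2)) else 0
  else 0.

(* rho_0 = integral of rho_1 over R; rho_1 is supported in [0,1]. *)
Definition rho0 : R := RInt rho1 0 1.

(* chi(y) = rho_0^{-1} * int_{-oo}^y rho_1; since rho_1 = 0 on (-oo,0],
   int_{-oo}^y rho_1 = int_0^y rho_1 (oriented integral, = 0 for y <= 0). *)
Definition chi (y : R) : R := RInt rho1 0 y / rho0.

Definition xi (s r : R) : R := 1 - chi (r + 1 - s^2 / 2).

Definition T (s r : R) : R :=
  s + RInt (fun r' => xi s r' * (r' / sqrt (r'^2 + s^2))) 0 r.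

From Stdlib Require Import Reals Lra.
From Coquelicot Require Import Coquelicot.
Open Scope R_scope.

(* [d/ds T(s,r) = 1 + int_0^r d/ds (xi s t * slope s t) dt].
   The factor [d/ds xi = s chi'(t+1-s^2/2)] is nonnegative and equals [-s d/dt xi],
   so it integrates to [s (1 - xi s r)] once [xi s 0 = 1]; the factor [d/ds slope <= 0]
   integrates to [s / sqrt (r^2+s^2) - 1].  As [0 <= slope <= 1] and [xi s] is
   nonincreasing, this squeezes
     [s / sqrt (r^2+s^2) <= d/ds T <= xi s r * s / sqrt (r^2+s^2) + (1 - xi s r) (1 + s)],
   which yields the three bounds with [C = 2]. *)

Lemma exp_neg_le_inv a : 0 < a -> exp (- a) <= / a.
Proof.
  intros Ha. rewrite exp_Ropp.
  apply Rinv_le_contravar; [exact Ha|].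
  pose proof (exp_ineq1 a ltac:(lra)); lra.
Qed.

Lemma rho1_ge0 y : 0 <= rho1 y.
Proof.
  unfold rho1; destruct Rlt_dec; [destruct Rlt_dec|]; try lra.
  apply Rlt_le, exp_pos.
Qed.

Lemma rho1_gt0 y : 0 < y < 1 -> 0 < rho1 y.
Proof. intros Hy; unfold rho1; destruct Rlt_dec; [destruct Rlt_dec|]; try lra; apply exp_pos. Qed.

Lemma rho1_out y : y <= 0 \/ 1 <= y -> rho1 y = 0.
Proof. intros Hy; unfold rho1; destruct Rlt_dec; [destruct Rlt_dec|]; lra. Qed.

(* On (0,1), [rho1 z = exp (-2/w) <= w/2 = 2 z (1 - z)] with [w = 1 - (2z-1)^2]. *)
Lemma rho1_le_dist y z : y <= 0 \/ 1 <= y -> rho1 z <= 2 * Rabs (z - y).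
Proof.
  intros Hy. unfold rho1; destruct Rlt_dec; [destruct Rlt_dec|];
    try (pose proof (Rabs_pos (z - y)); lra).
  assert (Hw : 0 < 1 - (2 * z - 1) ^ 2) by nra.
  assert (Hexp : exp (-2 / (1 - (2 * z - 1) ^ 2)) <= (1 - (2 * z - 1) ^ 2) / 2).
  { replace (-2 / (1 - (2 * z - 1) ^ 2)) with (- (2 / (1 - (2 * z - 1) ^ 2)))
      by (field; lra).
    eapply Rle_trans; [apply exp_neg_le_inv, Rdiv_lt_0_compat; lra|].
    right; field; lra. }
  destruct Hy.
  - rewrite Rabs_right by lra. nra.
  - rewrite Rabs_left1 by lra. nra.
Qed.

Lemma continuity_pt_of_le_dist f y k :
  0 < k -> f y = 0 -> (forall z, Rabs (f z) <= k * Rabs (z - y)) -> continuity_pt f y.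
Proof.
  intros Hk Hfy Hf eps Heps. exists (eps / k). split.
  - apply Rdiv_lt_0_compat; assumption.
  - intros z [_ Hz]. simpl in *. unfold R_dist in *. rewrite Hfy, Rminus_0_r.
    eapply Rle_lt_trans; [apply Hf|].
    apply (Rmult_lt_compat_l k) in Hz; [|exact Hk].
    replace (k * (eps / k)) with eps in Hz by (field; lra). exact Hz.
Qed.

Lemma rho1_continuous y : continuity_pt rho1 y.
Proof.
  destruct (Rle_lt_dec y 0) as [H0|H0]; [|destruct (Rlt_le_dec y 1) as [H1|H1]].
  - apply (continuity_pt_of_le_dist _ _ 2); [lra|apply rho1_out; lra|].
    intros z. rewrite Rabs_right by (apply Rle_ge, rho1_ge0). apply rho1_le_dist; lra.
  - apply continuity_pt_locally_ext
      with (a := Rmin y (1 - y)) (f := fun z => exp (-2 / (1 - (2 * z - 1) ^ 2))).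
    + apply Rmin_glb_lt; lra.
    + intros z Hz. unfold Rdist in Hz. apply Rabs_def2 in Hz.
      pose proof (Rmin_l y (1 - y)); pose proof (Rmin_r y (1 - y)).
      unfold rho1; destruct Rlt_dec; [destruct Rlt_dec|]; lra.
    + apply continuity_pt_filterlim.
      apply (ex_derive_continuous (fun z => exp (-2 / (1 - (2 * z - 1) ^ 2)))).
      auto_derive. nra.
  - apply (continuity_pt_of_le_dist _ _ 2); [lra|apply rho1_out; lra|].
    intros z. rewrite Rabs_right by (apply Rle_ge, rho1_ge0). apply rho1_le_dist; lra.
Qed.

Lemma ex_RInt_rho1 a b : ex_RInt rho1 a b.
Proof.
  apply (ex_RInt_continuous (V := R_CompleteNormedModule)).
  intros z _; apply continuity_pt_filterlim, rho1_continuous.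
Qed.

Lemma RInt_rho1_out a b : Rmax a b <= 0 \/ 1 <= Rmin a b -> RInt rho1 a b = 0.
Proof.
  intros Hab. rewrite (RInt_ext rho1 (fun _ => 0)).
  - rewrite RInt_const. apply Rmult_0_r.
  - intros x Hx. apply rho1_out. lra.
Qed.

Lemma rho0_pos : 0 < rho0.
Proof.
  assert (E : RInt (fun _ => 0) 0 1 = 0) by (rewrite RInt_const; apply Rmult_0_r).
  unfold rho0. rewrite <- E at 1.
  apply RInt_lt; try lra.
  - intros; apply continuity_pt_filterlim, rho1_continuous.
  - intros; apply continuous_const.
  - intros; apply rho1_gt0; lra.
Qed.

Lemma is_derive_chi y : is_derive chi y (rho1 y / rho0).
Proof.
  apply (is_derive_scal_l (K := R_AbsRing) (V := R_NormedModule) (fun y => RInt rho1 0 y)).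
  apply (is_derive_RInt rho1 (fun b => RInt rho1 0 b) 0).
  - apply filter_forall. intros b. apply (RInt_correct (V := R_CompleteNormedModule)), ex_RInt_rho1.
  - apply continuity_pt_filterlim, rho1_continuous.
Qed.

Lemma chi_continuous y : continuity_pt chi y.
Proof.
  apply continuity_pt_filterlim, (ex_derive_continuous (K := R_AbsRing) (V := R_NormedModule)).
  eexists; apply is_derive_chi.
Qed.

Lemma chi_le x y : x <= y -> chi x <= chi y.
Proof.
  intros Hxy. unfold chi, Rdiv.
  apply Rmult_le_compat_r; [apply Rlt_le, Rinv_0_lt_compat, rho0_pos|].
  rewrite <- (RInt_Chasles rho1 0 x y) by apply ex_RInt_rho1.
  pose proof (RInt_ge_0 rho1 x y Hxy (ex_RInt_rho1 x y) (fun t _ => rho1_ge0 t)).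
  simpl; unfold plus; simpl; lra.
Qed.

Lemma chi_eq0 y : y <= 0 -> chi y = 0.
Proof.
  intros Hy. unfold chi. rewrite RInt_rho1_out; [unfold Rdiv; apply Rmult_0_l|].
  left; apply Rmax_lub; lra.
Qed.

Lemma chi_eq1 y : 1 <= y -> chi y = 1.
Proof.
  intros Hy. pose proof rho0_pos. unfold chi.
  rewrite <- (RInt_Chasles rho1 0 1 y) by apply ex_RInt_rho1.
  rewrite (RInt_rho1_out 1 y); [|right; apply Rmin_glb; lra].
  simpl; unfold plus; simpl. unfold rho0. field. unfold rho0 in *; lra.
Qed.

Lemma chi_bounds y : 0 <= chi y <= 1.
Proof.
  split.
  - rewrite <- (chi_eq0 (Rmin y 0)) by apply Rmin_r. apply chi_le, Rmin_l.
  - rewrite <- (chi_eq1 (Rmax y 1)) by apply Rmax_r. apply chi_le, Rmax_l.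
Qed.

Lemma xi_eq1 s r : r <= -1 + s^2/2 -> xi s r = 1.
Proof. intros H. unfold xi. rewrite chi_eq0 by lra. ring. Qed.

Lemma xi_eq0 s r : s^2/2 <= r -> xi s r = 0.
Proof. intros H. unfold xi. rewrite chi_eq1 by lra. ring. Qed.

Lemma xi_bounds s r : 0 <= xi s r <= 1.
Proof. unfold xi. pose proof (chi_bounds (r + 1 - s^2/2)). lra. Qed.

Lemma xi_antitone s r1 r2 : r1 <= r2 -> xi s r2 <= xi s r1.
Proof. intros H. unfold xi. pose proof (chi_le (r1 + 1 - s^2/2) (r2 + 1 - s^2/2)). lra. Qed.

Definition xi_ds (s t : R) : R := s * (rho1 (t + 1 - s^2/2) / rho0).

Lemma xi_ds_ge0 s t : 0 <= s -> 0 <= xi_ds s t.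
Proof.
  intros Hs. unfold xi_ds. pose proof rho0_pos. pose proof (rho1_ge0 (t + 1 - s^2/2)).
  apply Rmult_le_pos, Rdiv_le_0_compat; lra.
Qed.

Lemma is_derive_xi_s s t : is_derive (fun u => xi u t) s (xi_ds s t).
Proof.
  unfold xi, xi_ds. pose proof (is_derive_chi (t + 1 - s^2/2)) as Hchi.
  auto_derive.
  - replace (t + 1 + - (s * (s * 1) * / 2)) with (t + 1 - s^2/2) by field.
    eexists; exact Hchi.
  - replace (t + 1 + - (s * (s * 1) * / 2)) with (t + 1 - s^2/2) by field.
    change (fun x : R => chi x) with chi. rewrite (is_derive_unique _ _ _ Hchi).
    field; apply Rgt_not_eq, rho0_pos.
Qed.

Definition slope (s t : R) : R := t / sqrt (t^2 + s^2).

Definition slope_ds (s t : R) : R := - (t * s / sqrt (t^2 + s^2) ^ 3).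

Lemma sum_sq_pos s t : s <> 0 -> 0 < t^2 + s^2.
Proof. intros Hs. pose proof (pow2_ge_0 t). pose proof (pow2_gt_0 s Hs). lra. Qed.

Lemma sqrt_sum_sq_pos s t : s <> 0 -> 0 < sqrt (t^2 + s^2).
Proof. intros Hs. apply sqrt_lt_R0, sum_sq_pos, Hs. Qed.

Lemma slope_bounds s t : s <> 0 -> 0 <= t -> 0 <= slope s t <= 1.
Proof.
  intros Hs Ht. pose proof (sqrt_sum_sq_pos s t Hs). unfold slope. split.
  - apply Rdiv_le_0_compat; lra.
  - apply Rmult_le_reg_r with (sqrt (t^2 + s^2)); [lra|].
    unfold Rdiv. rewrite Rmult_assoc, Rinv_l, Rmult_1_r, Rmult_1_l by lra.
    rewrite <- (sqrt_pow2 t) at 1 by lra. apply sqrt_le_1_alt. nra.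
Qed.

Lemma slope_ds_le0 s t : 0 < s -> 0 <= t -> slope_ds s t <= 0.
Proof.
  intros Hs Ht. pose proof (sqrt_sum_sq_pos s t ltac:(lra)). unfold slope_ds.
  enough (0 <= t * s / sqrt (t^2 + s^2) ^ 3) by lra.
  apply Rdiv_le_0_compat; [nra|apply pow_lt; lra].
Qed.

Lemma is_derive_slope_s s t : s <> 0 -> is_derive (fun u => slope u t) s (slope_ds s t).
Proof.
  intros Hs. pose proof (sum_sq_pos s t Hs). pose proof (sqrt_sum_sq_pos s t Hs).
  unfold slope, slope_ds. auto_derive.
  - replace (t * (t * 1) + s * (s * 1)) with (t^2 + s^2) by ring. repeat split; lra.
  - replace (t * (t * 1) + s * (s * 1)) with (t^2 + s^2) by ring. field. lra.
Qed.

Lemma continuity_2d_pt_pow f x y n :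
  continuity_2d_pt f x y -> continuity_2d_pt (fun u v => f u v ^ n) x y.
Proof.
  intros Hf; induction n as [|n IH]; simpl.
  - apply continuity_2d_pt_const.
  - apply continuity_2d_pt_mult; assumption.
Qed.

Ltac continuity_2d :=
  unfold Rdiv;
  repeat first
    [ apply (continuity_1d_2d_pt_comp rho1); [apply rho1_continuous|]
    | apply (continuity_1d_2d_pt_comp chi); [apply chi_continuous|]
    | apply (continuity_1d_2d_pt_comp sqrt); [apply continuity_pt_sqrt|]
    | apply continuity_2d_pt_id1 | apply continuity_2d_pt_id2 | apply continuity_2d_pt_const
    | apply continuity_2d_pt_plus | apply continuity_2d_pt_minus | apply continuity_2d_pt_opp
    | apply continuity_2d_pt_mult | apply continuity_2d_pt_pow | apply continuity_2d_pt_inv ].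

Lemma xi_continuity_2d s t : continuity_2d_pt xi s t.
Proof. unfold xi. continuity_2d. Qed.

Lemma xi_ds_continuity_2d s t : continuity_2d_pt xi_ds s t.
Proof. unfold xi_ds. continuity_2d. Qed.

Lemma slope_continuity_2d s t : s <> 0 -> continuity_2d_pt slope s t.
Proof.
  intros Hs. pose proof (sum_sq_pos s t Hs). pose proof (sqrt_sum_sq_pos s t Hs).
  unfold slope. continuity_2d; lra.
Qed.

Lemma slope_ds_continuity_2d s t : s <> 0 -> continuity_2d_pt slope_ds s t.
Proof.
  intros Hs. pose proof (sum_sq_pos s t Hs). pose proof (sqrt_sum_sq_pos s t Hs).
  unfold slope_ds. continuity_2d; try apply pow_nonzero; lra.
Qed.

Lemma continuity_2d_pt_continuous f x y : continuity_2d_pt f x y -> continuous (f x) y.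
Proof.
  intros Hf. apply continuity_pt_filterlim. intros eps Heps.
  destruct (Hf (mkposreal eps Heps)) as [d Hd].
  exists d. split; [apply cond_pos|]. intros z [_ Hz]. simpl in *. unfold R_dist in *.
  apply Hd; [rewrite Rminus_eq_0, Rabs_R0; apply cond_pos|exact Hz].
Qed.

Lemma is_RInt_xi_ds s a b : is_RInt (xi_ds s) a b (s * (xi s a - xi s b)).
Proof.
  replace (s * (xi s a - xi s b)) with (minus (- s * xi s b) (- s * xi s a))
    by (unfold minus, plus, opp; simpl; ring).
  apply (is_RInt_derive (V := R_CompleteNormedModule) (fun t => - s * xi s t)).
  - intros t _. unfold xi, xi_ds. pose proof (is_derive_chi (t + 1 - s^2/2)) as Hchi.
    auto_derive.
    + eexists; exact Hchi.
    + replace (t + 1 + - (s * (s * 1) / 2)) with (t + 1 - s^2/2) by field.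
      change (fun x : R => chi x) with chi. rewrite (is_derive_unique _ _ _ Hchi).
      field; apply Rgt_not_eq, rho0_pos.
  - intros t _. apply continuity_2d_pt_continuous, xi_ds_continuity_2d.
Qed.

Lemma is_RInt_slope_ds s a b :
  s <> 0 -> is_RInt (slope_ds s) a b (s / sqrt (b^2 + s^2) - s / sqrt (a^2 + s^2)).
Proof.
  intros Hs.
  apply (is_RInt_derive (V := R_CompleteNormedModule) (fun t => s / sqrt (t^2 + s^2))).
  - intros t _. pose proof (sum_sq_pos s t Hs). pose proof (sqrt_sum_sq_pos s t Hs).
    unfold slope_ds. auto_derive.
    + replace (t * (t * 1) + s * (s * 1)) with (t^2 + s^2) by ring. repeat split; lra.
    + replace (t * (t * 1) + s * (s * 1)) with (t^2 + s^2) by ring. field. lra.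
  - intros t _. apply continuity_2d_pt_continuous, slope_ds_continuity_2d, Hs.
Qed.

Definition T_integrand (s t : R) : R := xi s t * slope s t.

Definition T_integrand_ds (s t : R) : R := xi_ds s t * slope s t + xi s t * slope_ds s t.

Lemma is_derive_T_integrand_s s t :
  s <> 0 -> is_derive (fun u => T_integrand u t) s (T_integrand_ds s t).
Proof.
  intros Hs. unfold T_integrand, T_integrand_ds.
  apply (is_derive_mult (fun u => xi u t) (fun u => slope u t)).
  - apply is_derive_xi_s.
  - apply is_derive_slope_s, Hs.
  - intros; apply Rmult_comm.
Qed.

Lemma T_integrand_continuity_2d s t : s <> 0 -> continuity_2d_pt T_integrand s t.
Proof.
  intros Hs. apply continuity_2d_pt_mult; [apply xi_continuity_2d|apply slope_continuity_2d, Hs].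
Qed.

Lemma T_integrand_ds_continuity_2d s t : s <> 0 -> continuity_2d_pt T_integrand_ds s t.
Proof.
  intros Hs. apply continuity_2d_pt_plus; apply continuity_2d_pt_mult.
  - apply xi_ds_continuity_2d.
  - apply slope_continuity_2d, Hs.
  - apply xi_continuity_2d.
  - apply slope_ds_continuity_2d, Hs.
Qed.

Lemma is_derive_T s r : 0 < s -> is_derive (fun u => T u r) s (1 + RInt (T_integrand_ds s) 0 r).
Proof.
  intros Hs.
  assert (Hnear : locally s (fun u => 0 < u)) by (apply open_gt; exact Hs).
  apply (is_derive_plus (K := R_AbsRing) (V := R_NormedModule)
           (fun u => u) (fun u => RInt (T_integrand u) 0 r)).
  - apply (is_derive_id (K := R_AbsRing)).
  - rewrite (RInt_ext (T_integrand_ds s) (fun t => Derive (fun u => T_integrand u t) s))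
      by (intros t _; symmetry; apply is_derive_unique, is_derive_T_integrand_s; lra).
    apply is_derive_RInt_param.
    + apply (filter_imp (fun u => 0 < u)); [|exact Hnear].
      intros u Hu t _. eexists; apply is_derive_T_integrand_s; lra.
    + intros t _. apply continuity_2d_pt_ext_loc with (f := T_integrand_ds);
        [|apply T_integrand_ds_continuity_2d; lra].
      exists (mkposreal s Hs). intros u v Hu _. simpl in Hu. apply Rabs_def2 in Hu.
      symmetry; apply is_derive_unique, is_derive_T_integrand_s; lra.
    + apply (filter_imp (fun u => 0 < u)); [|exact Hnear].
      intros u Hu. apply (ex_RInt_continuous (V := R_CompleteNormedModule)).
      intros t _. apply continuity_2d_pt_continuous, T_integrand_continuity_2d; lra.
Qed.

Lemma T_integrand_ds_ge s t : 0 < s -> 0 <= t -> slope_ds s t <= T_integrand_ds s t.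
Proof.
  intros Hs Ht. unfold T_integrand_ds.
  pose proof (xi_ds_ge0 s t ltac:(lra)). pose proof (slope_bounds s t ltac:(lra) Ht).
  pose proof (xi_bounds s t). pose proof (slope_ds_le0 s t Hs Ht).
  nra.
Qed.

Lemma T_integrand_ds_le s t r :
  0 < s -> 0 <= t <= r -> T_integrand_ds s t <= xi_ds s t + xi s r * slope_ds s t.
Proof.
  intros Hs Ht. unfold T_integrand_ds.
  pose proof (xi_ds_ge0 s t ltac:(lra)). pose proof (slope_bounds s t ltac:(lra) (proj1 Ht)).
  pose proof (xi_antitone s t r (proj2 Ht)). pose proof (slope_ds_le0 s t Hs (proj1 Ht)).
  nra.
Qed.

Lemma Derive_T_bounds s r : 2 <= s -> 0 <= r ->
  s / sqrt (r^2 + s^2) <= Derive (fun u => T u r) s <=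
  xi s r * (s / sqrt (r^2 + s^2)) + (1 - xi s r) * (1 + s).
Proof.
  intros Hs Hr. assert (Hs0 : 0 < s) by lra.
  replace (Derive (fun u => T u r) s) with (1 + RInt (T_integrand_ds s) 0 r)
    by (symmetry; apply is_derive_unique, is_derive_T, Hs0).
  assert (HI : is_RInt (T_integrand_ds s) 0 r (RInt (T_integrand_ds s) 0 r)).
  { apply (RInt_correct (V := R_CompleteNormedModule)).
    apply (ex_RInt_continuous (V := R_CompleteNormedModule)).
    intros t _. apply continuity_2d_pt_continuous, T_integrand_ds_continuity_2d; lra. }
  assert (Hslope := is_RInt_slope_ds s 0 r ltac:(lra)).
  replace (s / sqrt (0^2 + s^2)) with 1 in Hslope
    by (replace (0^2 + s^2) with (s * s) by ring; rewrite sqrt_square by lra; field; lra).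
  assert (Hxi := is_RInt_xi_ds s 0 r).
  rewrite (xi_eq1 s 0) in Hxi by nra.
  pose proof (is_RInt_le _ _ 0 r _ _ Hr Hslope HI
                (fun t Ht => T_integrand_ds_ge s t Hs0 ltac:(lra))) as Hlow.
  assert (Hupp : RInt (T_integrand_ds s) 0 r <=
                 s * (1 - xi s r) + xi s r * (s / sqrt (r^2 + s^2) - 1)).
  { exact (is_RInt_le _ _ 0 r _ _ Hr HI
             (is_RInt_plus _ _ _ _ _ _ Hxi (is_RInt_scal _ _ _ (xi s r) _ Hslope))
             (fun t Ht => T_integrand_ds_le s t r Hs0 ltac:(lra))). }
  split; lra.
Qed.

Theorem lemma6p1 :
  exists C : R, 0 < C /\
  forall s r : R, 2 <= s -> 0 <= r ->
    ex_derive (fun s' => T s' r) s /\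
    (r <= -1 + s^2/2 ->
       Rabs (Derive (fun s' => T s' r) s) <= C * (s / sqrt (s^2 + r^2))) /\
    (-1 + s^2/2 <= r -> r <= s^2/2 ->
       Rabs (Derive (fun s' => T s' r) s)
         <= C * (xi s r * s / sqrt (s^2 + r^2) + 2 * (1 - xi s r) * s)) /\
    (s^2/2 <= r ->
       Rabs (Derive (fun s' => T s' r) s) <= 2 * C * s).
Proof.
  exists 2. split; [lra|]. intros s r Hs Hr.
  destruct (Derive_T_bounds s r Hs Hr) as [Hlow Hupp].
  rewrite (Rplus_comm (r^2)) in Hlow, Hupp.
  assert (Hq : 0 <= s / sqrt (s^2 + r^2)).
  { rewrite Rplus_comm. apply Rdiv_le_0_compat; [lra|apply sqrt_sum_sq_pos; lra]. }
  pose proof (xi_bounds s r).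
  rewrite Rabs_right by lra.
  split; [eexists; apply is_derive_T; lra|]. split; [|split].
  - intros Hreg. rewrite xi_eq1 in Hupp by exact Hreg. lra.
  - intros _ _. unfold Rdiv in *. nra.
  - intros Hreg. rewrite xi_eq0 in Hupp by exact Hreg. lra.
Qed.
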